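(* Let $n\geqslant 2$ and let $\alpha,\beta\in\mathcal{AO}_n$ be two elements of rank $n-1$. Then $\alpha\mathscr{J}\beta$ in the monoid $\mathcal{AO}_n$ if and only if $\mathrm{d}(\alpha)$ and $\mathrm{d}(\beta)$ have the same parity.
   Context: Let $\Omega_n=\{1<2<\cdots<n\}$. $\mathcal{I}_n$ denotes the symmetric inverse monoid of all partial injective maps of $\Omega_n$, maps written on the right and composed left to right; the rank of $\alpha$ is $|\mathrm{Im}(\alpha)|$. $\mathcal{AI}_n$ is the set of all $\alpha\in\mathcal{I}_n$ with $\alpha=\sigma|_{\mathrm{Dom}(\alpha)}$ for some even permutation $\sigma$ of $\Omega_n$. $\mathcal{POI}_n$ is the set of order-preserving elements of $\mathcal{I}_n$ and $\mathcal{AO}_n=\mathcal{AI}_n\cap\mathcal{POI}_n$ (a monoid). For $\alpha$ of rank $n-1$, $\mathrm{d}(\alpha)$ is the unique element of $\Omega_n\setminus\mathrm{Dom}(\alpha)$. $\mathscr{J}$ is Green's relation: $a\mathscr{J}b$ iff $MaM=MbM$ in the monoid $M$. *)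

From mathcomp Require Import all_boot all_order all_fingroup.
Set Implicit Arguments. Unset Strict Implicit. Unset Printing Implicit Defensive.

(* Omega_n = {1 < ... < n} is modelled by 'I_n = {0 < ... < n-1}
   (element i : 'I_n stands for i+1). A partial map of Omega_n is
   a finite function 'I_n -> option 'I_n (None = undefined). *)
Definition pmapI (n : nat) := {ffun 'I_n -> option 'I_n}.

Definition pdom n (a : pmapI n) : {set 'I_n} := [set x | a x != None].
Definition pim n (a : pmapI n) : {set 'I_n} := [set y | [exists x, a x == Some y]].

Definition is_pinj n (a : pmapI n) : bool :=
  [forall x, forall y, (a x != None) ==> (a x == a y) ==> (x == y)].

Definition prank n (a : pmapI n) : nat := #|pim a|.

(* composition, maps written on the right: x (a b) = (x a) b *)
Definition pcomp n (a b : pmapI n) : pmapI n := [ffun x => obind b (a x)].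

Definition is_ord_pres n (a : pmapI n) : bool :=
  [forall x : 'I_n, forall y : 'I_n, forall u : 'I_n, forall v : 'I_n,
     (x < y)%N ==> (a x == Some u) ==> (a y == Some v) ==> (u < v)%N].

Definition in_AI n (a : pmapI n) : Prop :=
  is_pinj a /\
  exists s : {perm 'I_n}, ~~ odd_perm s /\
    forall x, x \in pdom a -> a x = Some (s x).

Definition in_AO n (a : pmapI n) : Prop := in_AI a /\ is_ord_pres a.

Definition ideal_AO n (a : pmapI n) : pmapI n -> Prop :=
  fun c => exists u v, in_AO u /\ in_AO v /\ c = pcomp (pcomp u a) v.

Definition J_AO n (a b : pmapI n) : Prop :=
  forall c, ideal_AO a c <-> ideal_AO b c.

(* A rank n-1 element of AO_n undefined at d is the restriction to the
   complement of d of an even permutation s that is increasing off d.  Such an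
   s is determined by r = s d: it is [lift_perm d r 1], the cycle sending d to
   r and shifting the points in between by one, of sign (-1)^(d+r).  If b = u a v
   in AO_n, the permutation underlying u is increasing off d(b) and must send
   d(b) to d(a), so it is [lift_perm d(b) d(a) 1] and evenness forces
   d(a) = d(b) mod 2.  Conversely, when the parities agree this cycle is even,
   gives u, and then v is forced. *)
From mathcomp Require Import all_boot all_order all_fingroup.
(* Imported last so that [pcomp] denotes [Defs.pcomp], not ssrfun's [pcomp]. *)
From Pilot Require Import Defs.
Set Implicit Arguments. Unset Strict Implicit. Unset Printing Implicit Defensive.
Local Open Scope group_scope.

Section MonotoneOff.
Variable n : nat.
Implicit Types (d x y : 'I_n) (s t : {perm 'I_n}).

Definition mono_off d s : Prop := {in predC1 d &, {homo s : x y / (x < y)%N}}.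

Lemma mono_offV d s : mono_off d s -> mono_off (s d) s^-1.
Proof.
move=> sM x y; rewrite !inE => hx hy lt_xy.
have hx' : s^-1 x != d by rewrite -(inj_eq (@perm_inj _ s)) permKV.
have hy' : s^-1 y != d by rewrite -(inj_eq (@perm_inj _ s)) permKV.
case: ltngtP => // [gt_xy | /val_inj eq_xy].
- by have := sM _ _ hy' hx' gt_xy; rewrite !permKV ltnNge ltnW.
- by move: lt_xy; rewrite -(permKV s x) eq_xy permKV ltnn.
Qed.

Lemma mono_offM d s t : mono_off d s -> mono_off (s d) t -> mono_off d (s * t).
Proof.
move=> sM tM x y hx hy lt_xy; rewrite !permM.
by apply: tM; rewrite ?inE ?(inj_eq perm_inj) //; apply: sM.
Qed.

Lemma mono_off_fix_eq1 d s : s d = d -> mono_off d s -> s = 1.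
Proof.
pose rank x := #|[set y | (y != d) && (y < x)%N]|.
have rank_lt x y : x != d -> (x < y)%N -> (rank x < rank y)%N.
  move=> hx lt_xy; apply/proper_card/properP; split.
  - by apply/subsetP => z; rewrite !inE => /andP[-> /ltn_trans ->].
  - by exists x; rewrite !inE ?hx ?ltnn.
have rank_mono t x : t d = d -> mono_off d t -> x != d -> (rank x <= rank (t x))%N.
  move=> td tM hx; rewrite /rank -(card_imset _ (@perm_inj _ t)).
  apply/subset_leq_card/subsetP => z /imsetP[y]; rewrite !inE => /andP[hy lt_yx] ->.
  by rewrite -td (inj_eq perm_inj) hy tM.
move=> sd sM; apply/permP => x; rewrite perm1.
have [-> // | hx] := eqVneq x d.
have hsx : s x != d by rewrite -sd (inj_eq perm_inj).
have sVd : s^-1 d = d by rewrite -{1}sd permK.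
have le_x_sx := rank_mono s x sd sM hx.
have sVM : mono_off d s^-1 by rewrite -{1}sd; apply: mono_offV.
have := rank_mono _ _ sVd sVM hsx; rewrite permK => le_sx_x.
case: (ltngtP (s x) x) => [lt | gt | /val_inj //].
- by have := rank_lt _ _ hsx lt; rewrite ltnNge le_x_sx.
- by have := rank_lt _ _ hx gt; rewrite ltnNge le_sx_x.
Qed.

Lemma mono_off_uniq d s t : s d = t d -> mono_off d s -> mono_off d t -> s = t.
Proof.
move=> sdt sM tM; apply/eqP; rewrite eq_mulgV1; apply/eqP.
apply: (mono_off_fix_eq1 (d := d)); first by rewrite permM sdt permK.
by apply: mono_offM sM _; rewrite sdt; apply: mono_offV.
Qed.

End MonotoneOff.

Section LiftPermMonotone.
Variable m : nat.
Implicit Types (d r : 'I_m.+1) (s : {perm 'I_m.+1}).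

Lemma mono_off_lift_perm d r : mono_off d (lift_perm d r 1).
Proof.
move=> x y; rewrite !inE.
case: (unliftP d x) => [i -> _ | -> ]; last by rewrite eqxx.
case: (unliftP d y) => [j -> _ | -> ]; last by rewrite eqxx.
by rewrite !lift_perm_lift !perm1 /= !ltnNge !leq_bump2.
Qed.

Lemma odd_perm_mono_off d s : mono_off d s -> odd_perm s = odd d (+) odd (s d).
Proof.
move=> sM; have sd : s d = lift_perm d (s d) 1 d by rewrite lift_perm_id.
rewrite {1}(mono_off_uniq sd sM (mono_off_lift_perm (s d))).
by rewrite odd_lift_perm odd_perm1 addbF.
Qed.

End LiftPermMonotone.

Section PartialMaps.
Variable n : nat.
Implicit Types (a b c u v : pmapI n) (d : 'I_n) (s t : {perm 'I_n}).

Lemma is_ord_presP a :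
  reflect (forall x y u v : 'I_n, (x < y)%N -> a x = Some u -> a y = Some v -> (u < v)%N)
          (is_ord_pres a).
Proof.
apply: (iffP idP) => [/forallP ha x y u v | ha].
  move: (ha x) => /forallP /(_ y) /forallP /(_ u) /forallP /(_ v).
  by move=> h lt_xy ax ay; move: h; rewrite lt_xy ax ay !eqxx.
apply/forallP => x; apply/forallP => y; apply/forallP => u; apply/forallP => v.
by apply/implyP => lt_xy; apply/implyP => /eqP ax; apply/implyP => /eqP; exact: ha lt_xy ax.
Qed.

Lemma in_AO_intro a s : ~~ odd_perm s ->
  (forall x, x \in pdom a -> a x = Some (s x)) -> is_ord_pres a -> in_AO a.
Proof.
move=> even_s a_s a_ord; do 2!split => //; last by exists s.
apply/forallP => x; apply/forallP => y; apply/implyP => ax; apply/implyP => /eqP axy.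
have dx : x \in pdom a by rewrite inE.
have dy : y \in pdom a by rewrite inE -axy.
by move: axy; rewrite !a_s // => -[/perm_inj ->].
Qed.

Definition pid : pmapI n := [ffun x => Some x].

Lemma pid_AO : in_AO pid.
Proof.
apply: (@in_AO_intro _ 1); first by rewrite odd_perm1.
  by move=> x _; rewrite ffunE perm1.
by apply/is_ord_presP => x y u v lt_xy; rewrite !ffunE => -[<-] [<-].
Qed.

Lemma pcompA a b c : pcomp a (pcomp b c) = pcomp (pcomp a b) c.
Proof. by apply/ffunP => x; rewrite !ffunE; case: (a x) => //= y; rewrite ffunE. Qed.

Lemma pcomp_pid a : pcomp (pcomp pid a) pid = a.
Proof. by apply/ffunP => x; rewrite !ffunE /=; case: (a x) => //= y; rewrite ffunE. Qed.

Lemma pcomp_AO u v : in_AO u -> in_AO v -> in_AO (pcomp u v).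
Proof.
move=> [[_ [su [even_su u_su]]] u_ord] [[_ [sv [even_sv v_sv]]] v_ord].
apply: (@in_AO_intro _ (su * sv)); first by rewrite odd_permM (negbTE even_su).
  move=> x; rewrite inE ffunE.
  case ux: (u x) => [y|] //=; move: (ux); rewrite u_su ?inE ?ux // => -[<-] vy.
  by rewrite permM v_sv ?inE.
apply/is_ord_presP => x y p q lt_xy; rewrite !ffunE.
case ux: (u x) => [x'|] //; case uy: (u y) => [y'|] //= vx vy.
by apply: (is_ord_presP _ v_ord) vx vy; apply: (is_ord_presP _ u_ord) ux uy.
Qed.

Lemma ideal_AO_refl a : ideal_AO a a.
Proof. by exists pid, pid; rewrite pcomp_pid; split; [|split]; try exact: pid_AO. Qed.

Lemma ideal_AO_trans a b c : ideal_AO a b -> ideal_AO b c -> ideal_AO a c.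
Proof.
move=> [u [v [uAO [vAO ->]]]] [u' [v' [u'AO [v'AO ->]]]].
exists (pcomp u' u), (pcomp v v').
by split; [|split]; [exact: pcomp_AO | exact: pcomp_AO | rewrite !pcompA].
Qed.

Lemma J_AOP a b : J_AO a b <-> ideal_AO a b /\ ideal_AO b a.
Proof.
split=> [J_ab | [ab ba] c]; first by split; [apply/J_ab | apply/J_ab]; apply: ideal_AO_refl.
by split; apply: ideal_AO_trans.
Qed.

Definition perm_off d s : pmapI n := [ffun x => if x == d then None else Some (s x)].

Lemma perm_offE d s x : perm_off d s x = if x == d then None else Some (s x).
Proof. exact: ffunE. Qed.

Lemma pdom_perm_off d s : pdom (perm_off d s) = [set~ d].
Proof. by apply/setP => x; rewrite !inE perm_offE; case: (x =P d). Qed.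

Lemma perm_off_AO d s : ~~ odd_perm s -> mono_off d s -> in_AO (perm_off d s).
Proof.
move=> even_s sM; apply: (in_AO_intro even_s).
  by move=> x; rewrite pdom_perm_off !inE perm_offE => /negbTE ->.
apply/is_ord_presP => x y p q lt_xy; rewrite !perm_offE.
by case: eqVneq => // dx; case: eqVneq => // dy [<-] [<-]; apply: sM; rewrite ?inE.
Qed.

Lemma pcomp_perm_off d s t : pcomp (perm_off d s) (perm_off (s d) t) = perm_off d (s * t).
Proof.
apply/ffunP => x; rewrite ffunE !perm_offE; case: eqVneq => //= dx.
by rewrite perm_offE (inj_eq perm_inj) (negbTE dx) permM.
Qed.

Lemma AO_corank1 a d : in_AO a -> prank a = n.-1 -> d \notin pdom a ->
  exists s, [/\ ~~ odd_perm s, mono_off d s & a = perm_off d s].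
Proof.
move=> [[_ [s [even_s a_s]]] a_ord] rank_a d_a.
have im_a : pim a = s @: pdom a.
  apply/setP => y; rewrite inE; apply/existsP/imsetP => [[x /eqP ax] | [x dx ->]].
    have dx : x \in pdom a by rewrite inE ax.
    by exists x => //; move: ax; rewrite a_s // => -[].
  by exists x; rewrite a_s.
have dom_a : pdom a = [set~ d].
  apply/eqP; rewrite eqEcard cardsC1 card_ord -rank_a /prank im_a (card_imset _ perm_inj).
  by rewrite leqnn andbT; apply/subsetP => x dx; rewrite !inE; apply: contraNneq d_a => <-.
have a_def x : x != d -> a x = Some (s x) by move=> dx; rewrite a_s // dom_a !inE.
exists s; split => //.
  move=> x y; rewrite !inE => dx dy lt_xy.
  by apply: (is_ord_presP _ a_ord) lt_xy (a_def x dx) (a_def y dy).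
apply/ffunP => x; rewrite perm_offE; case: eqVneq => [-> | /a_def //].
by apply/eqP; move: d_a; rewrite inE negbK.
Qed.

End PartialMaps.

Section CorankOneIdeals.
Variable m : nat.
Implicit Types (da db : 'I_m.+1) (sa sb : {perm 'I_m.+1}).

Lemma ideal_AO_perm_off_odd_eq da db sa sb :
  ideal_AO (perm_off da sa) (perm_off db sb) -> odd da = odd db.
Proof.
move=> [u [v [[[_ [su [even_su u_su]]] u_ord] [_ b_eq]]]].
have u_def x : x != db -> u x = Some (su x) /\ su x != da.
  move=> dx; move/ffunP/(_ x): b_eq; rewrite !ffunE (negbTE dx).
  case ux: (u x) => [y|] //=; move: (ux); rewrite u_su ?inE ?ux // => -[<-].
  by rewrite perm_offE; case: eqVneq.
have su_db : su db = da.
  have [<- | ne] := eqVneq (su^-1 da) db; first by rewrite permKV.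
  by have := (u_def _ ne).2; rewrite permKV eqxx.
have suM : mono_off db su.
  move=> x y; rewrite !inE => dx dy lt_xy.
  by apply: (is_ord_presP _ u_ord) lt_xy (u_def x dx).1 (u_def y dy).1.
have := odd_perm_mono_off suM; rewrite su_db (negbTE even_su).
by case: (odd da); case: (odd db).
Qed.

Lemma ideal_AO_perm_off_of_odd_eq da db sa sb :
  ~~ odd_perm sa -> ~~ odd_perm sb -> mono_off da sa -> mono_off db sb ->
  odd da = odd db -> ideal_AO (perm_off da sa) (perm_off db sb).
Proof.
move=> even_sa even_sb saM sbM odd_ab.
pose c := lift_perm db da 1; pose t := (c * sa)^-1 * sb.
have c_db : c db = da by rewrite lift_perm_id.
have csa_db : (c * sa) db = sa da by rewrite permM c_db.
have even_c : ~~ odd_perm c by rewrite odd_lift_perm odd_perm1 odd_ab addbb.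
have cM : mono_off db c := mono_off_lift_perm da.
have csaM : mono_off db (c * sa) by apply: mono_offM cM _; rewrite c_db.
have tM : mono_off (sa da) t.
  by rewrite -csa_db; apply: mono_offM (mono_offV csaM) _; rewrite permK.
have even_t : ~~ odd_perm t.
  by rewrite !(odd_permM, odd_permV) (negbTE even_c) (negbTE even_sa).
exists (perm_off db c), (perm_off (sa da) t).
split; [exact: perm_off_AO even_c cM | split; first exact: perm_off_AO even_t tM].
by rewrite -{1}c_db pcomp_perm_off -csa_db pcomp_perm_off mulKVg.
Qed.

End CorankOneIdeals.

Theorem proposition1p3 (n : nat) (hn : (2 <= n)%N) (a b : pmapI n) :
  in_AO a -> in_AO b -> prank a = n.-1 -> prank b = n.-1 ->
  forall da db : 'I_n, da \notin pdom a -> db \notin pdom b ->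
  (J_AO a b <-> odd da = odd db).
Proof.
case: n hn a b => [// | m] _ a b aAO bAO rank_a rank_b da db da_a db_b.
have [sa [even_sa saM ->]] := AO_corank1 aAO rank_a da_a.
have [sb [even_sb sbM ->]] := AO_corank1 bAO rank_b db_b.
apply: iff_trans (J_AOP _ _) _; split => [[ab _] | odd_ab].
  exact: ideal_AO_perm_off_odd_eq ab.
by split; apply: ideal_AO_perm_off_of_odd_eq.
Qed.
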